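(* Assume the Setup below and $|n-p-1|>1$. Then, almost surely: (1) for either choice $\hat\alpha=c$ (with $c_0=0$) or $\hat\alpha=c\,\mathrm{tr}(W)$ (with $c_0=c$), $\hat b_S\to\min\{(n-1)^2+(n-1)-2,\ p^2+p-2\}$ as $c\to0$; (2) as $c\to\infty$, $\hat b_S\to-2$ if $\hat\alpha=c$, and $\hat b_S\to0$ if $\hat\alpha=c\,\mathrm{tr}(W)$.
   Context: Setup. Let $n\ge 2$, $p\ge1$. Let $X=(x_1,\dots,x_n)$ be a random $p\times n$ matrix whose columns are independent with $x_i\sim\mathcal N_p(\theta_i,\Sigma)$, where $\Sigma$ is a known $p\times p$ positive definite matrix and $\Theta\in\mathbb R^{p\times n}$. Let $\bar x=n^{-1}\sum_j x_j$, $\bar X=\bar x\,1_n^\top$, and $W=(X-\bar X)(X-\bar X)^\top\Sigma^{-1}$. The ridge statistic is $\hat\alpha=c$ or $\hat\alpha=c\,\mathrm{tr}(W)$ with a constant $c>0$; correspondingly $c_0=0$ or $c_0=c$. Put $V=(W+\hat\alpha I_p)^{-1}$ and define the estimated weights $$\hat a_S=\frac{(n-p-1)\mathrm{tr}(V)+\hat\alpha(\mathrm{tr}V)^2}{\mathrm{tr}(V^2W)}-(2c_0+1),\qquad \hat b_S=\{(n-1)p-2\}-\mathrm{tr}(VW)\,\hat a_S.$$ *)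

(* the reals are modelled by an arbitrary real closed field. *)
From HB Require Import structures.
From mathcomp Require Import all_boot all_order all_algebra.
Set Implicit Arguments. Unset Strict Implicit. Unset Printing Implicit Defensive.
Import Order.TTheory GRing.Theory Num.Theory.
Local Open Scope ring_scope.

Definition posdef (R : realFieldType) (p : nat) (S : 'M[R]_p) : Prop :=
  S^T = S /\ forall v : 'cV[R]_p, v != 0 -> 0 < (v^T *m S *m v) 0 0.

(* X - Xbar, with Xbar = xbar 1_n^T = X (n^-1 1_n 1_n^T) *)
Definition centered (R : realFieldType) (p n : nat) (X : 'M[R]_(p, n)) : 'M[R]_(p, n) :=
  X - X *m (n%:R^-1 *: const_mx 1).

Definition Wmat (R : realFieldType) (p n : nat) (Sigma : 'M[R]_p) (X : 'M[R]_(p, n))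
  : 'M[R]_p :=
  centered X *m (centered X)^T *m invmx Sigma.

Definition Vmat (R : realFieldType) (p : nat) (W : 'M[R]_p) (alpha : R) : 'M[R]_p :=
  invmx (W + alpha%:M).

Definition aS (R : realFieldType) (n p : nat) (W : 'M[R]_p) (alpha c0 : R) : R :=
  let V := Vmat W alpha in
  ((n%:R - p%:R - 1) * (\tr V) + alpha * (\tr V) ^+ 2) / (\tr (V *m V *m W))
  - (2 * c0 + 1).
Arguments aS {R} n p W alpha c0.

Definition bS (R : realFieldType) (n p : nat) (W : 'M[R]_p) (alpha c0 : R) : R :=
  ((n%:R - 1) * p%:R - 2) - (\tr (Vmat W alpha *m W)) * aS n p W alpha c0.
Arguments bS {R} n p W alpha c0.

Definition lim0 (R : realFieldType) (f : R -> R) (L : R) : Prop :=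
  forall eps : R, 0 < eps -> exists2 delta : R, 0 < delta &
    forall c : R, 0 < c -> c < delta -> `|f c - L| < eps.

Definition liminfty (R : realFieldType) (f : R -> R) (L : R) : Prop :=
  forall eps : R, 0 < eps -> exists M : R,
    forall c : R, 0 < c -> M < c -> `|f c - L| < eps.

(* Write C = X - Xbar and S = Sigma^-1, so that W = C B with B = C^T S.  By the
   push-through identity, tr V and tr V^2 are the traces of the resolvent of the
   n x n Gram matrix M = B C = C^T S C (and of its square), shifted by
   (p - n)/alpha and (p - n)/alpha^2.  M is symmetric positive semidefinite of
   rank r = rank C = min(n-1, p); diagonalising it over R[i] makes bS an explicit
   rational function of alpha and of the eigenvalues mu_j >= 0 of M.  As
   alpha -> 0 the zero eigenvalues produce poles (p - r)/alpha which cancel since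
   (p - r)(n - 1 - r) = 0, and the limit is (n-1)p - 2 - r(n - 2 + p - 2r), i.e.
   r^2 + r - 2.  As alpha -> oo, expanding in u = 1/alpha gives -2, and 0 when
   alpha = c tr W = c sum_j mu_j and c0 = c. *)

From HB Require Import structures.
From mathcomp Require Import all_boot all_order all_algebra.
From mathcomp Require Import ring lra zify.
From mathcomp Require Import spectral sesquilinear.
From mathcomp.real_closed Require Import complex.
Import Order.TTheory GRing.Theory Num.Theory.
Local Open Scope ring_scope.

Section Lim0.
Context {R : realFieldType}.
Implicit Types (f g : R -> R) (a L M : R).

Lemma lim0_ext {f g L} : lim0 f L -> (forall c, 0 < c -> f c = g c) -> lim0 g L.
Proof.
move=> hf fg e e0; have [d d0 hd] := hf e e0; exists d => // c c0 cd.
by rewrite -fg //; apply: hd.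
Qed.

Lemma lim0_eq f L M : L = M -> lim0 f L -> lim0 f M.
Proof. by move->. Qed.

Lemma lim0_cst a : lim0 (fun=> a) a.
Proof. by move=> e e0; exists 1 => // c _ _; rewrite subrr normr0. Qed.

Lemma lim0_id : lim0 (fun c : R => c) 0.
Proof. by move=> e e0; exists e => // c c0 ce; rewrite subr0 gtr0_norm. Qed.

Lemma lim0_subr f L : lim0 f L <-> lim0 (fun c => f c - L) 0.
Proof.
by split=> h e /h[d d0 hd]; exists d => // c c0 cd; have := hd c c0 cd; rewrite subr0.
Qed.

Lemma lim0D {f g L M} : lim0 f L -> lim0 g M -> lim0 (fun c => f c + g c) (L + M).
Proof.
move=> hf hg e e0; have e20 : 0 < e / 2 by rewrite divr_gt0.
have [d1 d10 h1] := hf _ e20; have [d2 d20 h2] := hg _ e20.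
exists (Num.min d1 d2) => [|c c0]; first by rewrite lt_min d10 d20.
rewrite lt_min => /andP[/(h1 c c0) + /(h2 c c0)].
rewrite !ltr_norml => /andP[? ?] /andP[? ?]; apply/andP; split; lra.
Qed.

Lemma lim0Ml a {f} : lim0 f 0 -> lim0 (fun c => a * f c) 0.
Proof.
move=> hf e e0; have e1 : 0 < e / (`|a| + 1) by rewrite divr_gt0 // ltr_wpDl.
have [d d0 h] := hf _ e1; exists d => // c c0 /(h c c0).
rewrite !subr0 normrM ltr_pdivlMr ?ltr_wpDl // => ?.
have := normr_ge0 (f c); have := normr_ge0 a; nra.
Qed.

Lemma lim0M0 {f g} : lim0 f 0 -> lim0 g 0 -> lim0 (fun c => f c * g c) 0.
Proof.
move=> hf hg e e0; have [d1 d10 h1] := hf _ e0; have [d2 d20 h2] := hg _ ltr01.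
exists (Num.min d1 d2) => [|c c0]; first by rewrite lt_min d10 d20.
rewrite lt_min => /andP[/(h1 c c0) + /(h2 c c0)]; rewrite !subr0 normrM => ? ?.
have := normr_ge0 (f c); have := normr_ge0 (g c); nra.
Qed.

Lemma lim0M {f g L M} : lim0 f L -> lim0 g M -> lim0 (fun c => f c * g c) (L * M).
Proof.
move=> /lim0_subr hf /lim0_subr hg; apply/lim0_subr.
have := lim0D (lim0D (lim0M0 hf hg) (lim0Ml L hg)) (lim0Ml M hf).
by rewrite !addr0 => /lim0_ext; apply=> c _; ring.
Qed.

Lemma lim0N {f L} : lim0 f L -> lim0 (fun c => - f c) (- L).
Proof.
move=> /(lim0M (lim0_cst (-1))); rewrite mulN1r => /lim0_ext; apply=> c _.
by rewrite mulN1r.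
Qed.

Lemma lim0X {f L} k : lim0 f L -> lim0 (fun c => f c ^+ k) (L ^+ k).
Proof.
move=> h; elim: k => [|k IH].
  by rewrite expr0; move: (lim0_cst 1) => /lim0_ext; apply=> c _; rewrite expr0.
by rewrite exprS; move: (lim0M h IH) => /lim0_ext; apply=> c _; rewrite exprS.
Qed.

Lemma lim0V {f L} : lim0 f L -> L != 0 -> lim0 (fun c => (f c)^-1) L^-1.
Proof.
move=> hf L0 e e0; have aL : 0 < `|L| by rewrite normr_gt0.
have e1 : 0 < Num.min (`|L| / 2) (e * `|L| ^+ 2 / 2).
  by rewrite lt_min !divr_gt0 ?mulr_gt0 ?exprn_gt0.
have [d d0 h] := hf _ e1; exists d => // c c0 /(h c c0).
rewrite lt_min => /andP[h1 h2].
have fL : `|L| / 2 < `|f c|.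
  by have := ler_dist_dist (f c) L; rewrite ler_norml => /andP[? ?]; lra.
have fc0 : f c != 0 by rewrite -normr_gt0 (lt_trans _ fL) ?divr_gt0.
have -> : (f c)^-1 - L^-1 = (L - f c) / (f c * L) by field; rewrite fc0 L0.
rewrite normrM normfV normrM distrC ltr_pdivrMr ?mulr_gt0 ?normr_gt0 //.
have : e * `|L| ^+ 2 / 2 <= e * (`|f c| * `|L|).
  by rewrite -mulrA ler_pM2l // expr2 mulrAC ler_pM2r //; lra.
lra.
Qed.

Lemma lim0_sum (I : Type) (s : seq I) (F : I -> R -> R) (L : I -> R) :
  (forall i, lim0 (F i) (L i)) ->
  lim0 (fun c => \sum_(i <- s) F i c) (\sum_(i <- s) L i).
Proof.
move=> h; elim: s => [|i s IH].
  by rewrite big_nil; move: (lim0_cst 0) => /lim0_ext; apply=> c _; rewrite big_nil.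
by rewrite big_cons; move: (lim0D (h i) IH) => /lim0_ext; apply=> c _; rewrite big_cons.
Qed.

Lemma lim0_scale {f L m} : 0 < m -> lim0 f L -> lim0 (fun c => f (c * m)) L.
Proof.
move=> m0 hf e /hf[d d0 h]; exists (d / m) => [|c c0 cd]; first by rewrite divr_gt0.
by apply: h; rewrite ?mulr_gt0 // -ltr_pdivlMr.
Qed.

Lemma liminfty_lim0V {f L} : lim0 (fun t => f t^-1) L -> liminfty f L.
Proof.
move=> hf e /hf[d d0 h]; exists d^-1 => c c0 cd.
rewrite -[c]invrK; apply: h; first by rewrite invr_gt0.
by rewrite -(invrK d) ltf_pV2 ?posrE ?invr_gt0.
Qed.

End Lim0.

(* Solves [lim0 f ?L] by recursion on the syntax of [f], instantiating [?L];
   the side conditions [L != 0] of [lim0V] are left as goals. *)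
Ltac lim0_tac :=
  first
  [ eassumption
  | apply: lim0_cst
  | apply: lim0_id
  | lazymatch goal with
    | |- lim0 (fun x => @?f x + @?g x) _ => eapply (@lim0D _ f g); lim0_tac
    | |- lim0 (fun x => - @?f x) _ => eapply (@lim0N _ f); lim0_tac
    | |- lim0 (fun x => @?f x * @?g x) _ => eapply (@lim0M _ f g); lim0_tac
    | |- lim0 (fun x => (@?f x)^-1) _ => eapply (@lim0V _ f); [lim0_tac | ]
    | |- lim0 (fun x => @?f x ^+ ?k) _ => eapply (@lim0X _ f _ k); lim0_tac
    end ].

Section TraceFormula.
Variable R : realFieldType.
Implicit Types (n p r : nat) (a u s q : R).

Definition bS_traces n p a (c0 t1 t2 : R) : R :=
  ((n%:R - 1) * p%:R - 2) - (p%:R - a * t1) *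
    (((n%:R - p%:R - 1) * t1 + a * t1 ^+ 2) / (t1 - a * t2) - (2 * c0 + 1)).

Lemma bS_tracesE n p (W : 'M[R]_p) a (c0 : R) : W + a%:M \in unitmx ->
  bS n p W a c0 = bS_traces n p a c0 (\tr (Vmat W a)) (\tr (Vmat W a *m Vmat W a)).
Proof.
move=> Wu; set V := Vmat W a.
have VW : V *m W = 1%:M - a *: V.
  by apply/eqP; rewrite eq_sym subr_eq -mul_mx_scalar -mulmxDr mulVmx.
have trVW : \tr (V *m W) = p%:R - a * \tr V by rewrite VW raddfB /= mxtrace1 mxtraceZ.
have trVVW : \tr (V *m V *m W) = \tr V - a * \tr (V *m V).
  by rewrite -mulmxA VW mulmxBr mulmx1 -scalemxAr raddfB /= mxtraceZ.
by rewrite /bS /aS -/V trVW trVVW.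
Qed.

(* When [(p - r) (n - 1 - r) = 0] the poles at [a = 0] of the two traces cancel. *)
Lemma bS_traces_shift n p r a (c0 : R) s q : a != 0 ->
  (p%:R - r%:R) * (n%:R - 1 - r%:R) = 0 :> R ->
  bS_traces n p a c0 ((p%:R - r%:R) / a + s) ((p%:R - r%:R) / a ^+ 2 + q) =
  ((n%:R - 1) * p%:R - 2) - (r%:R - a * s) *
    (((n%:R - p%:R - 1 + 2 * (p%:R - r%:R)) * s + a * s ^+ 2) / (s - a * q)
     - (2 * c0 + 1)).
Proof.
move=> a0 hK; rewrite /bS_traces; set K := p%:R - r%:R.
have -> : p%:R - a * (K / a + s) = r%:R - a * s by rewrite /K; field.
have -> : K / a + s - a * (K / a ^+ 2 + q) = s - a * q by field.
have -> : (n%:R - p%:R - 1) * (K / a + s) + a * (K / a + s) ^+ 2 =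
    (n%:R - p%:R - 1 + 2 * K) * s + a * s ^+ 2 + K * (n%:R - 1 - r%:R) / a.
  by rewrite /K; field.
by rewrite hK mul0r addr0.
Qed.

Lemma bS_traces_inv n p u (c0 g1 g2 : R) : u != 0 -> g2 != 0 ->
  bS_traces n p u^-1 c0 (u * (p%:R - u * g1)) (u ^+ 2 * p%:R - u ^+ 3 * (g1 + g2)) =
  ((n%:R - 1) * p%:R - 2)
  - g1 * ((n%:R - p%:R - 1) * (p%:R - u * g1) + (p%:R - u * g1) ^+ 2) / g2
  + u * g1 * (2 * c0 + 1).
Proof.
move=> u0 g20; rewrite /bS_traces.
have -> : u * (p%:R - u * g1) - u^-1 * (u ^+ 2 * p%:R - u ^+ 3 * (g1 + g2)) = u ^+ 2 * g2.
  by field.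
have -> : p%:R - u^-1 * (u * (p%:R - u * g1)) = u * g1 by field.
by field; rewrite u0 g20.
Qed.

End TraceFormula.
Arguments bS_traces {R} n p a c0 t1 t2.

Section SpectralLimits.
Context {R : realFieldType} {n : nat} (p : nat) (mu : 'I_n -> R).
Hypothesis mu_ge0 : forall j, 0 <= mu j.
Hypothesis mu_pos : exists j, 0 < mu j.

(* The shifts [(p - n) / a ^+ k] come from [mxtrace_resolvent_mulC]. *)
Definition bS_spectral (a c0 : R) : R :=
  bS_traces n p a c0 ((p%:R - n%:R) / a + \sum_j (mu j + a)^-1)
                     ((p%:R - n%:R) / a ^+ 2 + \sum_j ((mu j + a)^-1) ^+ 2).

Section SmallRidge.
Context {r : nat}.
Hypothesis count_nz : (\sum_j (mu j != 0%R))%N = r.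
Hypothesis rank_gap : (p%:R - r%:R) * (n%:R - 1 - r%:R) = 0 :> R.

Let res_nz j a := if mu j == 0 then 0 else (mu j + a)^-1.

Lemma sum_resolvent k {a} : a != 0 ->
  \sum_j ((mu j + a)^-1) ^+ k.+1 = (n%:R - r%:R) / a ^+ k.+1 + \sum_j res_nz j a ^+ k.+1.
Proof.
move=> a0; have -> : n%:R - r%:R = \sum_j ((mu j == 0)%:R : R).
  rewrite -count_nz natr_sum -[n in n%:R]card_ord -sumr_const -sumrB.
  by apply: eq_bigr => j _; case: (mu j == 0); rewrite ?subr0 ?subrr.
rewrite mulr_suml -big_split; apply: eq_bigr => j _ /=; rewrite /res_nz.
by case: eqP => [->|_]; rewrite ?add0r ?mul1r ?expr0n ?addr0 ?exprVn ?mul0r ?add0r.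
Qed.

Lemma lim0_res_nz j : lim0 (res_nz j) (res_nz j 0).
Proof.
rewrite /res_nz; case: eqP => mj; first exact: lim0_cst.
by move: (lim0D (lim0_cst (mu j)) lim0_id) => /lim0V; rewrite addr0; apply; apply/eqP.
Qed.

Lemma sum_res_nz_gt0 : 0 < \sum_j res_nz j 0.
Proof.
have res0_ge0 j : 0 <= res_nz j 0 by rewrite /res_nz; case: eqP; rewrite // addr0 invr_ge0.
have [j mj] := mu_pos; rewrite (bigD1 j) //= ltr_pwDl ?sumr_ge0 //.
by rewrite /res_nz gt_eqF // addr0 invr_gt0.
Qed.

Lemma bS_spectral_small {c0 : R -> R} : lim0 c0 0 ->
  lim0 (fun a => bS_spectral a (c0 a))
    (((n%:R - 1) * p%:R - 2) - r%:R * (n%:R - p%:R - 1 + 2 * (p%:R - r%:R) - 1)).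
Proof.
move=> hc0; set s := fun a => \sum_j res_nz j a; set q := fun a => \sum_j res_nz j a ^+ 2.
have hs : lim0 s (s 0) by apply: lim0_sum => j; exact: lim0_res_nz.
have hq : lim0 q (q 0) by apply: lim0_sum => j; apply: lim0X; exact: lim0_res_nz.
have s0 := sum_res_nz_gt0.
suff /lim0_ext : lim0 (fun a => ((n%:R - 1) * p%:R - 2) - (r%:R - a * s a) *
    (((n%:R - p%:R - 1 + 2 * (p%:R - r%:R)) * s a + a * s a ^+ 2) / (s a - a * q a)
     - (2 * c0 a + 1))) (((n%:R - 1) * p%:R - 2)
       - r%:R * (n%:R - p%:R - 1 + 2 * (p%:R - r%:R) - 1)).
  apply=> a /lt0r_neq0 a0.
  have sum1 : \sum_j (mu j + a)^-1 = (n%:R - r%:R) / a + s a := sum_resolvent 0 a0.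
  have shift b x : (p%:R - n%:R) * b + ((n%:R - r%:R) * b + x) = (p%:R - r%:R) * b + x.
    by rewrite addrA -mulrDl addrA subrK.
  by rewrite /bS_spectral sum1 sum_resolvent // !shift bS_traces_shift.
eapply lim0_eq; last first.
- lim0_tac; by rewrite mul0r subr0 gt_eqF.
- by rewrite !(mul0r, subr0, addr0) mulfK ?gt_eqF // mulr0 add0r.
Qed.

End SmallRidge.

Section LargeRidge.

Let g1 u := \sum_j mu j / (1 + mu j * u).
Let g2 u := \sum_j mu j / (1 + mu j * u) ^+ 2.
Let m := \sum_j mu j.

Lemma sum_mu_gt0 : 0 < m.
Proof. by have [j mj] := mu_pos; rewrite /m (bigD1 j) //= ltr_pwDl ?sumr_ge0. Qed.

Lemma g2_gt0 u : 0 <= u -> 0 < g2 u.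
Proof.
move=> u0; have den j : 0 < 1 + mu j * u by rewrite ltr_pwDl ?mulr_ge0.
have [j mj] := mu_pos; rewrite /g2 (bigD1 j) //= ltr_pwDl ?divr_gt0 ?exprn_gt0 //.
by apply: sumr_ge0 => i _; rewrite divr_ge0 ?mu_ge0 // exprn_ge0 // ltW.
Qed.

Lemma lim0_g1 : lim0 g1 m.
Proof.
apply: lim0_sum => j; eapply lim0_eq; last first.
- by lim0_tac; rewrite mulr0 addr0 oner_neq0.
- by rewrite mulr0 addr0 invr1 mulr1.
Qed.

Lemma lim0_g2 : lim0 g2 m.
Proof.
apply: lim0_sum => j; eapply lim0_eq; last first.
- by lim0_tac; rewrite mulr0 addr0 expr1n oner_neq0.
- by rewrite mulr0 addr0 expr1n invr1 mulr1.
Qed.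

Lemma sum_resolvent_inv {u} : 0 < u ->
  [/\ \sum_j (mu j + u^-1)^-1 = u * n%:R - u ^+ 2 * g1 u
    & \sum_j ((mu j + u^-1)^-1) ^+ 2 = u ^+ 2 * n%:R - u ^+ 3 * (g1 u + g2 u)].
Proof.
move=> u_gt0; have u0 : u != 0 by rewrite gt_eqF.
have den j : 1 + mu j * u != 0 by rewrite gt_eqF // ltr_pwDl ?mulr_ge0 ?mu_ge0 ?ltW.
have den' j : mu j + u^-1 != 0 by rewrite gt_eqF // ltr_wpDl ?mu_ge0 ?invr_gt0.
have sum_cst (x : R) : x *+ n = \sum_(j < n) x by rewrite sumr_const card_ord.
rewrite /g1 /g2 -big_split !mulr_natr !sum_cst.
by split; rewrite mulr_sumr -sumrB; apply: eq_bigr => j _ /=; field; rewrite ?den ?den' u0.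
Qed.

Lemma bS_spectral_inv u c0 : 0 < u -> bS_spectral u^-1 c0 =
  ((n%:R - 1) * p%:R - 2)
  - g1 u * ((n%:R - p%:R - 1) * (p%:R - u * g1 u) + (p%:R - u * g1 u) ^+ 2) / g2 u
  + u * g1 u * (2 * c0 + 1).
Proof.
move=> u_gt0; have u0 : u != 0 by rewrite gt_eqF.
rewrite /bS_spectral; have [-> ->] := sum_resolvent_inv u_gt0.
have -> : (p%:R - n%:R) / u^-1 + (u * n%:R - u ^+ 2 * g1 u) = u * (p%:R - u * g1 u).
  by field.
have -> : (p%:R - n%:R) / u^-1 ^+ 2 + (u ^+ 2 * n%:R - u ^+ 3 * (g1 u + g2 u)) =
    u ^+ 2 * p%:R - u ^+ 3 * (g1 u + g2 u) by field.
by rewrite bS_traces_inv // gt_eqF // g2_gt0 // ltW.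
Qed.

Lemma bS_spectral_large : lim0 (fun u => bS_spectral u^-1 0) (-2).
Proof.
have h1 := lim0_g1; have h2 := lim0_g2; have m0 := sum_mu_gt0.
suff /lim0_ext : lim0 (fun u => ((n%:R - 1) * p%:R - 2)
    - g1 u * ((n%:R - p%:R - 1) * (p%:R - u * g1 u) + (p%:R - u * g1 u) ^+ 2) / g2 u
    + u * g1 u * (2 * 0 + 1)) (-2).
  by apply=> u u0; rewrite bS_spectral_inv.
eapply lim0_eq; last first.
- by lim0_tac; rewrite gt_eqF.
- by rewrite !(mul0r, subr0, addr0); field; rewrite gt_eqF.
Qed.

Lemma bS_spectral_large_tr : lim0 (fun u => bS_spectral u^-1 (u * m)^-1) 0.
Proof.
have h1 := lim0_g1; have h2 := lim0_g2; have m0 := sum_mu_gt0.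
suff /lim0_ext : lim0 (fun u => ((n%:R - 1) * p%:R - 2)
    - g1 u * ((n%:R - p%:R - 1) * (p%:R - u * g1 u) + (p%:R - u * g1 u) ^+ 2) / g2 u
    + (2 * g1 u * m^-1 + u * g1 u)) 0.
  apply=> u u0; rewrite bS_spectral_inv //; congr (_ + _).
  by field; rewrite !gt_eqF.
eapply lim0_eq; last first.
- by lim0_tac; rewrite gt_eqF.
- by rewrite !(mul0r, subr0, addr0); field; rewrite gt_eqF.
Qed.

End LargeRidge.

End SpectralLimits.

Section PushThrough.
Context {F : fieldType} {p n : nat} {C : 'M[F]_(p, n)} {B : 'M[F]_(n, p)} {a : F}.
Hypothesis a0 : a != 0.
Hypothesis BCa_unit : B *m C + a%:M \in unitmx.

Let Xa := invmx (B *m C + a%:M).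

Lemma mulmx_resolvent : Xa *m (B *m C) = 1%:M - a *: Xa.
Proof. by apply/eqP; rewrite eq_sym subr_eq -mul_mx_scalar -mulmxDr mulVmx. Qed.

Lemma resolvent_mulC :
  (C *m B + a%:M) *m (a^-1 *: (1%:M - C *m Xa *m B)) = 1%:M.
Proof.
have CX : (C *m B + a%:M) *m C = C *m (B *m C + a%:M).
  by rewrite mulmxDl mulmxDr scalar_mxC !mulmxA.
rewrite -scalemxAr mulmxBr mulmx1 !mulmxA CX -(mulmxA C) mulmxV // mulmx1.
by rewrite addrAC subrr add0r scale_scalar_mx mulVf.
Qed.

Lemma unitmx_resolvent_mulC : C *m B + a%:M \in unitmx.
Proof. by case: (mulmx1_unit resolvent_mulC). Qed.

Lemma invmx_resolvent_mulC :
  invmx (C *m B + a%:M) = a^-1 *: (1%:M - C *m Xa *m B).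
Proof.
by rewrite -[LHS]mulmx1 -{1}resolvent_mulC mulKmx // unitmx_resolvent_mulC.
Qed.

Lemma mxtrace_resolvent_mulC :
  \tr (invmx (C *m B + a%:M)) = (p%:R - n%:R) / a + \tr Xa.
Proof.
rewrite invmx_resolvent_mulC mxtraceZ raddfB /= mxtrace1 -mulmxA mxtrace_mulC.
by rewrite -mulmxA mulmx_resolvent raddfB /= mxtrace1 mxtraceZ; field.
Qed.

Lemma mxtrace_resolvent2_mulC :
  \tr (invmx (C *m B + a%:M) *m invmx (C *m B + a%:M)) =
  (p%:R - n%:R) / a ^+ 2 + \tr (Xa *m Xa).
Proof.
set Y := C *m Xa *m B.
have trY : \tr Y = n%:R - a * \tr Xa.
  by rewrite /Y -mulmxA mxtrace_mulC -mulmxA mulmx_resolvent raddfB /= mxtrace1 mxtraceZ.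
have trYY : \tr (Y *m Y) = n%:R - 2 * a * \tr Xa + a ^+ 2 * \tr (Xa *m Xa).
  have -> : \tr (Y *m Y) = \tr ((Xa *m (B *m C)) *m (Xa *m (B *m C))).
    by rewrite /Y -!mulmxA mxtrace_mulC !mulmxA.
  rewrite mulmx_resolvent mulmxBl mul1mx mulmxBr mulmx1 -scalemxAl -scalemxAr scalerA.
  by rewrite !raddfB /= !mxtraceZ mxtrace1; ring.
rewrite invmx_resolvent_mulC -scalemxAl -scalemxAr scalerA mxtraceZ mulmxBl mul1mx.
by rewrite mulmxBr mulmx1 !raddfB /= mxtrace1 -/Y trY trYY; field.
Qed.

End PushThrough.

Lemma mxrank_diag (F : fieldType) n (d : 'rV[F]_n) :
  \rank (diag_mx d) = (\sum_j (d ord0 j != 0%R))%N.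
Proof.
elim: n d => [|n IH]; first by move=> d; rewrite big_ord0 flatmx0 mxrank0.
rewrite -[n.+1]/(1 + n)%N => d.
rewrite -[d]hsubmxK diag_mx_row rank_diag_block_mx IH.
rewrite big_split_ord big_ord1 /= row_mxEl; congr (_ + _)%N; last first.
  by apply: eq_bigr => i _; rewrite row_mxEr.
have [l0|l0] := eqVneq (lsubmx d ord0 ord0) 0.
  rewrite (_ : diag_mx _ = 0) ?mxrank0 ?l0 //.
  by apply/matrixP => i j; rewrite !ord1 [diag_mx _ _ _]mxE l0 mul0rn mxE.
by rewrite mxrank_unit // unitmxE det_diag big_ord1 unitfE.
Qed.

Section Diagonalizable.
Context {F L : fieldType} {f : {rmorphism F -> L}} {n : nat}.
Context {M : 'M[F]_n} {P : 'M[L]_n} {mu : 'rV[F]_n}.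
Hypothesis P_unit : P \in unitmx.
Hypothesis M_diag : map_mx f M = invmx P *m diag_mx (map_mx f mu) *m P.

Let D (e : 'rV[F]_n) := invmx P *m diag_mx (map_mx f e) *m P.

Lemma conj_diagM e e' : D e *m D e' = D (\row_j (e 0 j * e' 0 j)).
Proof.
rewrite /D !mulmxA (mulmxK P_unit) -[_ *m diag_mx _ *m diag_mx _]mulmxA mulmx_diag.
by congr (_ *m diag_mx _ *m _); apply/rowP => j; rewrite !mxE rmorphM.
Qed.

Lemma conj_diagD e e' : D e + D e' = D (e + e').
Proof. by rewrite /D -mulmxDl -mulmxDr map_mxD -raddfD. Qed.

Lemma conj_diag_cst a : D (const_mx a) = (f a)%:M.
Proof.
rewrite /D map_const_mx diag_const_mx mul_mx_scalar -scalemxAl (mulVmx P_unit).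
by rewrite scalemx1.
Qed.

Lemma mxtrace_conj_diag e : \tr (D e) = f (\sum_j e 0 j).
Proof.
rewrite /D mxtrace_mulC mulmxA (mulmxV P_unit) mul1mx mxtrace_diag rmorph_sum.
by apply: eq_bigr => j _; rewrite mxE.
Qed.

Lemma mxtrace_diagonalizable : \tr M = \sum_j mu ord0 j.
Proof. by apply: (fmorph_inj f); rewrite -trace_map_mx M_diag mxtrace_conj_diag. Qed.

Lemma mxrank_diagonalizable : \rank M = (\sum_j (mu ord0 j != 0%R))%N.
Proof.
rewrite -(mxrank_map f) M_diag mxrankMfree ?row_free_unit //.
rewrite eqmxMfull ?row_full_unit ?unitmx_inv // mxrank_diag.
by apply: eq_bigr => j _; rewrite mxE fmorph_eq0.
Qed.

Lemma eigenvalue_diagonalizable j : eigenvalue M (mu ord0 j).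
Proof.
rewrite -(eigenvalue_map f); apply/eigenvalueP; exists (row j P).
  rewrite M_diag !mulmxA -row_mul (mulmxV P_unit) row1 -rowE row_diag_mx.
  by rewrite -scalemxAl -rowE mxE.
apply/eqP => /(congr1 (mulmx^~ (invmx P))).
rewrite -row_mul (mulmxV P_unit) row1 mul0mx => /rowP/(_ j).
by rewrite !mxE !eqxx => /eqP; rewrite oner_eq0.
Qed.

Lemma resolvent_diagonalizable {a} : (forall j, mu ord0 j + a != 0) ->
  [/\ M + a%:M \in unitmx,
      \tr (invmx (M + a%:M)) = \sum_j (mu ord0 j + a)^-1 &
      \tr (invmx (M + a%:M) *m invmx (M + a%:M)) = \sum_j ((mu ord0 j + a)^-1) ^+ 2].
Proof.
move=> mua0; set e := mu + const_mx a; set e' := \row_j (e ord0 j)^-1.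
have Ma : map_mx f (M + a%:M) = D e.
  by rewrite map_mxD map_scalar_mx M_diag -conj_diag_cst conj_diagD.
have e'e : D e' *m D e = 1%:M.
  rewrite conj_diagM -(rmorph1 f) -conj_diag_cst; congr D; apply/rowP => j.
  by rewrite !mxE mulVf // -[mu ord0 j + a]/(e ord0 j) ?mxE.
have [_ De_unit] := mulmx1_unit e'e.
have invDe : invmx (D e) = D e' by rewrite -[LHS]mul1mx -e'e mulmxK.
have Ma_unit : M + a%:M \in unitmx by rewrite -(map_unitmx f) Ma.
split=> //; apply: (fmorph_inj f); rewrite -trace_map_mx ?map_mxM map_invmx Ma invDe.
  by rewrite mxtrace_conj_diag; congr (f _); apply: eq_bigr => j _; rewrite !mxE.
by rewrite conj_diagM mxtrace_conj_diag; congr (f _); apply: eq_bigr => j _; rewrite !mxE expr2.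
Qed.

End Diagonalizable.

Section PositiveDefinite.
Context {R : realFieldType}.

Lemma mulmx_tr_gt0 {m} (u : 'rV[R]_m) : u != 0 -> 0 < (u *m u^T) 0 0.
Proof.
move=> u0; have sq_ge0 i : 0 <= u 0 i * u^T i 0 by rewrite mxE -expr2 sqr_ge0.
rewrite mxE lt_def sumr_ge0 ?andbT; last by move=> i _; exact: sq_ge0.
apply: contra u0 => /eqP/(psumr_eq0P (fun i _ => sq_ge0 i)) u2; apply/eqP/rowP => i.
by have /eqP := u2 i isT; rewrite !mxE mulf_eq0 orbb => /eqP.
Qed.

Lemma eigenvalue_psd_ge0 {m} {M : 'M[R]_m} {a} :
  (forall u : 'rV_m, 0 <= (u *m M *m u^T) 0 0) -> eigenvalue M a -> 0 <= a.
Proof.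
move=> M_psd /eigenvalueP[u uM u0]; have := M_psd u.
by rewrite uM -scalemxAl mxE pmulr_lge0 ?mulmx_tr_gt0.
Qed.

Lemma posdef_rowP {m} {S : 'M[R]_m} {u : 'rV_m} :
  posdef S -> u != 0 -> 0 < (u *m S *m u^T) 0 0.
Proof. by move=> [_ S_pd] u0; have := S_pd u^T; rewrite trmxK trmx_eq0; apply. Qed.

Lemma posdef_unitmx {m} {S : 'M[R]_m} : posdef S -> S \in unitmx.
Proof.
move=> S_pd; rewrite -row_free_unit -kermx_eq0; apply: contraT => /rowV0Pn[u].
rewrite sub_kermx => /eqP uS u0; have := posdef_rowP S_pd u0.
by rewrite uS mul0mx mxE ltxx.
Qed.

Lemma posdef_invmx {m} {S : 'M[R]_m} : posdef S -> posdef (invmx S).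
Proof.
move=> S_pd; have S_unit := posdef_unitmx S_pd; have [S_sym _] := S_pd.
split=> [|v v0]; first by rewrite trmx_inv S_sym.
have w0 : invmx S *m v != 0.
  by apply: contraNneq v0 => w0; rewrite -(mulKVmx S_unit v) w0 mulmx0.
by have := S_pd.2 _ w0; rewrite trmx_mul trmx_inv S_sym -!mulmxA mulKVmx // mulmxA.
Qed.

Section Gram.
Context {p n : nat} {S : 'M[R]_p} (C : 'M[R]_(p, n)).
Hypothesis S_pd : posdef S.

Let G := C^T *m S *m C.

Lemma gram_form (u : 'rV_n) : u *m G *m u^T = (u *m C^T) *m S *m (u *m C^T)^T.
Proof. by rewrite /G trmx_mul trmxK !mulmxA. Qed.

Lemma gram_sym : G^T = G.
Proof. by rewrite /G !trmx_mul trmxK S_pd.1 mulmxA. Qed.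

Lemma gram_psd (u : 'rV_n) : 0 <= (u *m G *m u^T) 0 0.
Proof.
rewrite gram_form; have [->|v0] := eqVneq (u *m C^T) 0; first by rewrite !mul0mx mxE.
exact/ltW/posdef_rowP.
Qed.

Lemma mxrank_gram : \rank G = \rank C.
Proof.
apply/eqP; rewrite eqn_leq mxrankM_maxr -mxrank_tr /=.
have sub : (kermx G <= kermx C^T)%MS.
  apply/sub_kermxP/row_matrixP => i; rewrite row_mul row0.
  apply: contraTeq isT => v0; have := posdef_rowP S_pd v0.
  by rewrite -gram_form -row_mul mulmx_ker row0 mul0mx mxE ltxx.
have := mxrankS sub; rewrite !mxrank_ker.
by have := rank_leq_row G; have := rank_leq_row C^T; lia.
Qed.

End Gram.
End PositiveDefinite.

Lemma realsym_diagonalizable {R : rcfType} {n} {M : 'M[R]_n} : M^T = M ->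
  exists (P : 'M[R[i]]_n) (mu : 'rV[R]_n), P \in unitmx /\
    map_mx (real_complex R) M = invmx P *m diag_mx (map_mx (real_complex R) mu) *m P.
Proof.
move=> M_sym; set MC := map_mx (real_complex R) M.
have MC_real : MC \is a realmx by apply/mxOverP => i j; rewrite mxE complex_real.
have MC_sym : MC \is symmetricmx.
  apply/is_hermitianmxP; rewrite expr0 scale1r.
  by apply/matrixP => i j; rewrite !mxE /= -[in LHS]M_sym mxE.
have MC_herm := realsym_hermsym MC_sym MC_real.
exists (spectralmx MC), (map_mx (@complex.Re R) (spectral_diag MC)).
split; first exact: spectral_unit.
have -> : map_mx (real_complex R) (map_mx (@complex.Re R) (spectral_diag MC)) =
    spectral_diag MC.
  apply/matrixP => i j; rewrite !mxE; apply: RRe_real.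
  exact: (mxOverP (hermitian_spectral_diag_real MC_herm)).
exact/orthomx_spectralP/(symmetric_normalmx MC_sym MC_real).
Qed.

Lemma Wmat_spectrum {R : rcfType} {n p} {Sigma : 'M[R]_p} (X : 'M[R]_(p, n)) :
  posdef Sigma -> exists mu : 'I_n -> R,
  [/\ forall j, 0 <= mu j,
      (\sum_j (mu j != 0%R))%N = \rank (centered X),
      \tr (Wmat Sigma X) = \sum_j mu j
    & forall a c0, 0 < a -> bS n p (Wmat Sigma X) a c0 = bS_spectral p mu a c0].
Proof.
move=> Sigma_pd; set C := centered X; set S := invmx Sigma.
have S_pd : posdef S by exact: posdef_invmx.
have W_CB : Wmat Sigma X = C *m (C^T *m S) by rewrite /Wmat mulmxA.
have [P [mu [P_unit M_diag]]] := realsym_diagonalizable (gram_sym C S_pd).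
have mu_ge0 j : 0 <= mu ord0 j.
  exact: eigenvalue_psd_ge0 (gram_psd C S_pd) (eigenvalue_diagonalizable P_unit M_diag j).
exists (fun j => mu ord0 j); split.
- exact: mu_ge0.
- by rewrite -(mxrank_diagonalizable P_unit M_diag) mxrank_gram.
- by rewrite W_CB mxtrace_mulC (mxtrace_diagonalizable P_unit M_diag).
move=> a c0 a_gt0; have a0 : a != 0 by rewrite gt_eqF.
have mua0 j : mu ord0 j + a != 0 by rewrite gt_eqF // ltr_wpDl.
have [M_unit tr1 tr2] := resolvent_diagonalizable P_unit M_diag mua0.
rewrite W_CB bS_tracesE ?(unitmx_resolvent_mulC a0 M_unit) // /Vmat.
by rewrite (mxtrace_resolvent_mulC a0 M_unit) (mxtrace_resolvent2_mulC a0 M_unit) tr1 tr2.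
Qed.

Lemma exists_gt0_count (R : numDomainType) n (mu : 'I_n -> R) :
  (forall j, 0 <= mu j) -> (0 < \sum_j (mu j != 0%R))%N -> exists j, 0 < mu j.
Proof.
move=> mu_ge0; case: (pickP (fun j => mu j != 0)) => [j mj _ | mu0].
  by exists j; rewrite lt_def mj mu_ge0.
by rewrite big1 // => j _; rewrite mu0.
Qed.

Lemma minn_rank_gap (R : numDomainType) n p : (0 < n)%N ->
  (p%:R - (minn n.-1 p)%:R) * (n%:R - 1 - (minn n.-1 p)%:R) = 0 :> R.
Proof.
move=> n_gt0; have n1 : n.-1%:R = n%:R - 1 :> R by rewrite -subn1 natrB.
case: (leqP n.-1 p) => _; last by rewrite subrr mul0r.
by rewrite n1 subrr mulr0.
Qed.

Lemma minn_limit (R : realDomainType) n p : (0 < n)%N ->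
  ((n%:R - 1) * p%:R - 2)
  - (minn n.-1 p)%:R * (n%:R - p%:R - 1 + 2 * (p%:R - (minn n.-1 p)%:R) - 1) =
  Num.min ((n%:R - 1) ^+ 2 + (n%:R - 1) - 2) (p%:R ^+ 2 + p%:R - 2) :> R.
Proof.
move=> n_gt0; have n1 : n.-1%:R = n%:R - 1 :> R by rewrite -subn1 natrB.
have n1_ge0 : 0 <= n%:R - 1 :> R by rewrite -n1.
have p_ge0 : 0 <= p%:R :> R by [].
case: (leqP n.-1 p) => [le_np|lt_pn].
  rewrite n1 min_l; first by ring.
  by move: le_np; rewrite -(ler_nat R) n1 => ?; nra.
rewrite min_r; first by ring.
by move: lt_pn => /ltnW; rewrite -(ler_nat R) n1 => ?; nra.
Qed.

Theorem proposition4 (R : rcfType) (n p : nat) (Sigma : 'M[R]_p) (X : 'M[R]_(p, n)) :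
  (2 <= n)%N -> (1 <= p)%N -> posdef Sigma ->
  1 < `|n%:R - p%:R - 1 : R| ->
  (* the almost-sure event: X - Xbar has its generic rank min(n-1, p) *)
  \rank (centered X) = minn n.-1 p ->
  let W := Wmat Sigma X in
  let L0 := Num.min ((n%:R - 1) ^+ 2 + (n%:R - 1) - 2) (p%:R ^+ 2 + p%:R - 2) in
  [/\ lim0 (fun c => bS n p W c 0) L0,
      lim0 (fun c => bS n p W (c * \tr W) c) L0,
      liminfty (fun c => bS n p W c 0) (-2)
    & liminfty (fun c => bS n p W (c * \tr W) c) 0].
Proof.
move=> n_ge2 p_ge1 Sigma_pd _ rankC W L0.
have [mu [mu_ge0 count_nz trW bSE]] := Wmat_spectrum X Sigma_pd.
rewrite rankC in count_nz.
have mu_pos : exists j, 0 < mu j by apply: exists_gt0_count mu_ge0 _; rewrite count_nz; lia.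
have m_gt0 := sum_mu_gt0 mu mu_ge0 mu_pos.
have n_gt0 : (0 < n)%N := ltnW n_ge2.
have small (c0 : R -> R) := bS_spectral_small p mu mu_ge0 mu_pos count_nz
  (minn_rank_gap R n p n_gt0) (c0 := c0).
rewrite (minn_limit R n p n_gt0) -/L0 in small.
have lim0_div : lim0 (fun c => c / \sum_j mu j) 0.
  by have := lim0M lim0_id (lim0_cst (\sum_j mu j)^-1); rewrite mul0r.
split.
- move: (small _ (lim0_cst 0)) => /lim0_ext; apply=> c c_gt0.
  by rewrite bSE.
- move: (lim0_scale m_gt0 (small _ lim0_div)) => /lim0_ext; apply=> c c_gt0.
  by rewrite trW bSE ?mulr_gt0 // mulfK ?gt_eqF.
- apply: liminfty_lim0V; move: (bS_spectral_large p mu mu_ge0 mu_pos) => /lim0_ext.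
  by apply=> t t_gt0; rewrite bSE ?invr_gt0.
- apply: liminfty_lim0V; have m_inv_gt0 : 0 < (\sum_j mu j)^-1 by rewrite invr_gt0.
  move: (lim0_scale m_inv_gt0 (bS_spectral_large_tr p mu mu_ge0 mu_pos)) => /lim0_ext.
  apply=> t t_gt0; rewrite trW bSE ?mulr_gt0 ?invr_gt0 //.
  by rewrite invfM invrK mulfVK ?gt_eqF.
Qed.
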